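(* Let $G$ be a directed acyclic graph on vertex set $V$ and let $\pi:V\to\{1,\dots,n\}$ be a bijection such that $xy\in E(G)$ implies $\pi(x)<\pi(y)$. Let $u,v\in V$ with $\pi(u)>\pi(v)$ be such that $G\cup\{uv\}$ is still acyclic. Let $W=\{w\in V:\pi(w)\in[\pi(v),\pi(u)]\}$, let $T\subseteq W$ be the set of vertices of $W$ reachable from $v$ in $G$ (including $v$), let $S\subseteq W$ be the set of vertices of $W$ that can reach $u$ in $G$ (including $u$), and let $Z=W\setminus(S\cup T)$. Then in $G\cup\{uv\}$: no vertex $t\in T$ can reach a vertex $s\in S$; no vertex $t\in T$ can reach a vertex $z\in Z$; and no vertex $z\in Z$ can reach a vertex $s\in S$. *)

From mathcomp Require Import all_boot.
Set Implicit Arguments. Unset Strict Implicit. Unset Printing Implicit Defensive.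

(* A directed graph on a finite vertex type V is an edge relation e : rel V.
   Reachability ("x can reach y") is connect e x y: there is a directed path
   (possibly of length 0) from x to y. *)

(* acyclic: no directed cycle, i.e. no edge x -> y with a path back y ~> x
   (this also excludes loops). *)
Definition acyclic (V : finType) (e : rel V) : Prop :=
  forall x y, e x y -> ~~ connect e y x.

Definition add_edge (V : finType) (e : rel V) (u v : V) : rel V :=
  fun x y => e x y || ((x == u) && (y == v)).

From mathcomp Require Import all_boot.

Set Implicit Arguments.
Unset Strict Implicit.

(* A path of G ∪ {uv} that leaves G uses the edge uv, so its start reaches u
   in G. Since G ∪ {uv} is acyclic, v does not reach u in G; hence no vertex
   reachable from v in G reaches u, and its paths in G ∪ {uv} stay in G.
   Reaching S or leaving T would then connect v to u in G, and a vertex of Z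
   reaching S, with or without the new edge, would reach u and lie in S. *)

Section AddEdge.

Variables (V : finType) (e : rel V) (u v : V).

Lemma connect_add_edge x y :
  connect (add_edge e u v) x y -> connect e x y || connect e x u.
Proof.
move=> /connectP[p pth ->]; elim: p x pth => [|z p IH] x /=.
  by rewrite connect0.
case/andP=> /orP[exz | /andP[/eqP-> _]] /IH /orP[zy | zu]; rewrite ?connect0 ?orbT //.
- by rewrite (connect_trans (connect1 exz) zy).
- by rewrite (connect_trans (connect1 exz) zu) orbT.
Qed.

Lemma connect_sub_add_edge x y : connect e x y -> connect (add_edge e u v) x y.
Proof.
by apply: connect_sub => a b eab; rewrite connect1 // /add_edge eab.
Qed.

Lemma acyclic_add_edge_connectN : acyclic (add_edge e u v) -> ~~ connect e v u.
Proof.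
move=> acyc; apply: contraNN (acyc u v _) => [/connect_sub_add_edge //|].
by rewrite /add_edge !eqxx orbT.
Qed.

Lemma connect_add_edge_to x y :
  connect (add_edge e u v) x y -> connect e y u -> connect e x u.
Proof.
by move=> /connect_add_edge /orP[xy yu | //]; apply: connect_trans xy yu.
Qed.

Lemma connect_add_edge_from x y :
  ~~ connect e v u -> connect e v x ->
  connect (add_edge e u v) x y -> connect e x y.
Proof.
move=> vNu vx /connect_add_edge /orP[// | xu].
by rewrite (connect_trans vx xu) in vNu.
Qed.

End AddEdge.

Theorem lemma2 (V : finType) (e : rel V) (n : nat) (pi : V -> 'I_n)
  (Hacyc : acyclic e)
  (Hpi : bijective pi)
  (Horder : forall x y, e x y -> pi x < pi y)
  (u v : V) (Huv : pi v < pi u)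
  (Hacyc' : acyclic (add_edge e u v)) :
  let W := [set w | pi v <= pi w <= pi u] in
  let T := [set w in W | connect e v w] in
  let S := [set w in W | connect e w u] in
  let Z := W :\: (S :|: T) in
  [/\ forall t s, t \in T -> s \in S -> ~~ connect (add_edge e u v) t s,
      forall t z, t \in T -> z \in Z -> ~~ connect (add_edge e u v) t z &
      forall z s, z \in Z -> s \in S -> ~~ connect (add_edge e u v) z s].
Proof.
move=> W T S Z; have vNu := acyclic_add_edge_connectN Hacyc'.
split=> [t s | t z | z s]; rewrite !inE.
- move=> /andP[_ vt] /andP[_ su]; apply/negP=> /(connect_add_edge_from vNu vt) ts.
  by rewrite (connect_trans vt (connect_trans ts su)) in vNu.
- move=> /andP[_ vt] /andP[zNST zW]; apply/negP=> /(connect_add_edge_from vNu vt) tz.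
  by rewrite (connect_trans vt tz) zW !orbT in zNST.
- move=> /andP[zNST zW] /andP[_ su]; apply/negP=> /connect_add_edge_to/(_ su) zu.
  by rewrite zu zW in zNST.
Qed.
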